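(* The degrees of the state polynomials of 2-bridge knots are independent of the degrees of their Alexander polynomials. Specifically: (i) for every $N$ there exists a 2-bridge knot having an essential spanning surface whose state polynomial is linear (degree 1) while its Alexander polynomial has degree at least $N$ (e.g. the $(2,m)$ torus knot, $m$ odd, has a state polynomial of degree $1$ and Alexander polynomial of degree $m-1$); (ii) for every $N$ there exists a 2-bridge knot whose Alexander polynomial is quadratic and which has an essential spanning surface whose state polynomial has degree at least $N$ (e.g. the 2-bridge knot with continued fraction expansion $[2i,2j]$ has quadratic Alexander polynomial and state polynomials of degrees $2i$ and $2j$).
   Context: Let $K=K(\alpha,\beta)$ be a 2-bridge knot. Essential spanning surfaces $S$ ($\partial S=K$, incompressible and $\partial$-incompressible in the knot exterior) are, by Hatcher–Thurston, isotopic to standard plumbed surfaces associated to continued fraction expansions $\beta/\alpha=r+\cfrac{1}{n_1+\cfrac{1}{\cdots+\cfrac{1}{n_k}}}$, $|n_i|\ge2$, written $[n_1,\dots,n_k]$: $k$ vertically stacked bands, the $i$-th with $n_i$ half-twists, each with a parallel untwisted band, joined by horizontal disks at levels $0,\dots,k$. The curve system $x_1,\dots,x_k$ consists of the cores of the $k$ boxes; $x_i\cap x_{i+1}$ is one point, others disjoint. A state matrix $V_S$ has entries $v_{ij}=\mathrm{lk}(x_i,x_j^{i*})$ for $i\neq j$, where $x_j^{i*}$ is $x_j$ pushed off along a chosen normal near the intersection point with $x_i$ (and equal to $x_j$ if disjoint), and $v_{ii}=\frac12\mathrm{lk}(x_i,\tau(x_i))$, $\tau(x_i)$ the double push-off of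 $x_i$ to both sides of $S$. The state polynomial is $\Delta_S(t)=\det(V_S-tV_S^T)$ up to units $\pm t^m$, of degree $k$. When $S$ is orientable (all $n_i$ even; this is the unique Seifert surface among them, of minimal genus), $\Delta_S$ is the Alexander polynomial of $K$. *)

From HB Require Import structures.
From mathcomp Require Import all_boot all_order all_algebra.
Set Implicit Arguments. Unset Strict Implicit. Unset Printing Implicit Defensive.
Import Order.TTheory GRing.Theory Num.Theory.
Local Open Scope ring_scope.

(* The 2-bridge knot K(alpha, beta): alpha odd, alpha > 1, gcd(alpha,beta) = 1. *)
Definition two_bridge (alpha : nat) (beta : int) : Prop :=
  [/\ odd alpha, (1 < alpha)%N & coprime alpha `|beta|%N].

Fixpoint cf (ns : seq int) : rat :=
  match ns with
  | [::] => 0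
  | [:: n] => n%:~R
  | n :: s => n%:~R + (cf s)^-1
  end.

(* ns (with some integer r) is an admissible expansion of beta/alpha:
   beta/alpha = r + 1/[n_1,...,n_k], k >= 1, |n_i| >= 2.  By Hatcher--Thurston
   these index the essential spanning surfaces of K(alpha,beta). *)
Definition essential_expansion (alpha : nat) (beta : int) (ns : seq int) : Prop :=
  [/\ (0 < size ns)%N, all (fun n : int => (2 <= `|n|)%N) ns &
      exists r : int, beta%:~R / alpha%:R = r%:~R + (cf ns)^-1 :> rat].

(* The surface is orientable (a Seifert surface) iff all n_i are even. *)
Definition orientable_expansion (ns : seq int) : bool := all (fun n : int => ~~ odd `|n|) ns.

(* State matrix of the plumbed surface: v_ii = n_i/2, v_{i,i+1} = 1, v_{i+1,i} = 0,
   all other entries 0 (x_i, x_j disjoint for |i-j|>1). *)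
Definition state_matrix (ns : seq int) : 'M[rat]_(size ns) :=
  \matrix_(i, j) (if i == j then (ns`_i)%:~R / 2
                  else if (j == i.+1 :> nat) then 1 else 0).

Definition state_poly (ns : seq int) : {poly rat} :=
  \det (\matrix_(i, j) ((state_matrix ns i j)%:P - 'X * (state_matrix ns j i)%:P)).

(* Degree of a Laurent-type polynomial up to units +-t^m: highest minus lowest
   exponent with nonzero coefficient (0 for the zero polynomial). *)
Definition span_deg (p : {poly rat}) : nat :=
  ((size p).-1 - find (fun c : rat => c != 0%R) (polyseq p))%N.

Definition has_state_degree (alpha : nat) (beta : int) (d : nat) : Prop :=
  exists ns, essential_expansion alpha beta ns /\ span_deg (state_poly ns) = d.

(* The Alexander polynomial of K(alpha,beta) (= state polynomial of its Seifert
   surface among the plumbed surfaces) has degree d. *)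
Definition alexander_degree (alpha : nat) (beta : int) (d : nat) : Prop :=
  (exists ns, essential_expansion alpha beta ns /\ orientable_expansion ns) /\
  (forall ns, essential_expansion alpha beta ns -> orientable_expansion ns ->
     span_deg (state_poly ns) = d).

From HB Require Import structures.
From mathcomp Require Import all_boot all_order all_algebra.
From mathcomp Require Import zify ring lra.
Set Implicit Arguments. Unset Strict Implicit. Unset Printing Implicit Defensive.
Import Order.TTheory GRing.Theory Num.Theory.
Local Open Scope ring_scope.

(* The state matrix V of [n_1, ..., n_k] is upper bidiagonal with diagonal n_i/2, so for
   nonzero n_i both V and V^T are invertible; then det(V - t V^T) is, up to the unit
   (-1)^k det V^T, the characteristic polynomial of V V^-T, and its constant term is det V.
   Hence the state polynomial of every essential surface has degree exactly k, and both
   parts come down to exhibiting expansions of suitable lengths: the torus knot K(m, 1)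
   has the expansion [m] and the even expansion [-2, 2, -2, ...] of length m - 1, the twist
   knot K(2k+3, 2) has the even expansion [k+1, 2] and the expansion [-2, 2, ..., +-3] of
   length k + 1.
   The Alexander degree is read off any even expansion, because for alpha odd the even
   expansion of beta/alpha is unique.  The integer part r must have the parity of beta,
   for otherwise [n_1, ..., n_k] = alpha / (beta - r alpha) would be a ratio of odd
   integers, which an even continued fraction never is (its value P/Q keeps P + Q odd).
   Two such integer parts differ by less than 2, so they agree, and the terms n_i are then
   recovered one at a time by the same argument. *)

Definition pencil_poly (R : comNzRingType) n (V W : 'M[R]_n) : {poly R} :=
  \det (map_mx polyC V - 'X *: map_mx polyC W).

Lemma pencil_poly_coef0 (R : comNzRingType) n (V W : 'M[R]_n) :
  (pencil_poly V W)`_0 = \det V.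
Proof.
rewrite -horner_coef0 -horner_evalE -det_map_mx; congr (\det _).
by apply/matrixP => i j; rewrite !mxE /= horner_evalE !hornerE subr0.
Qed.

Lemma pencil_poly_char_poly (F : fieldType) n (V W : 'M[F]_n) : W \in unitmx ->
  pencil_poly V W = ((-1) ^+ n * \det W) *: char_poly (V *m invmx W).
Proof.
move=> Wu; rewrite /pencil_poly.
have -> : map_mx polyC V - 'X *: map_mx polyC W =
          - (char_poly_mx (V *m invmx W) *m map_mx polyC W).
  by rewrite /char_poly_mx mulmxBl mul_scalar_mx -map_mxM mulmxKV // opprB.
rewrite -scaleN1r detZ det_mulmx det_map_mx -/(char_poly _).
by rewrite -mul_polyC rmorphM rmorphXn rmorphN rmorph1 mulrA mulrAC.
Qed.

Lemma size_pencil_poly (F : fieldType) n (V W : 'M[F]_n) : W \in unitmx ->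
  size (pencil_poly V W) = n.+1.
Proof.
move=> Wu; rewrite pencil_poly_char_poly // size_scale ?size_char_poly //.
by rewrite mulf_neq0 ?signr_eq0 // -unitfE -unitmxE.
Qed.

Lemma span_deg_coef0 (p : {poly rat}) : p`_0 != 0 -> span_deg p = (size p).-1.
Proof.
by rewrite /span_deg; case: (polyseq p) => [|c s] /=; rewrite ?eqxx // => ->; rewrite subn0.
Qed.

Lemma span_deg_pencil_poly n (V W : 'M[rat]_n) : V \in unitmx -> W \in unitmx ->
  span_deg (pencil_poly V W) = n.
Proof.
move=> Vu Wu; rewrite span_deg_coef0 ?size_pencil_poly //.
by rewrite pencil_poly_coef0 -unitfE -unitmxE.
Qed.

Lemma state_matrix_trig ns : is_trig_mx (state_matrix ns)^T.
Proof.
apply/is_trig_mxP => i j lij.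
by rewrite !mxE -val_eqE /= gtn_eqF // ltn_eqF // ltnS ltnW.
Qed.

Lemma det_state_matrix ns :
  \det (state_matrix ns) = \prod_(i < size ns) ((ns`_i)%:~R / 2).
Proof.
rewrite -det_tr det_trig ?state_matrix_trig //.
by apply: eq_bigr => i _; rewrite !mxE eqxx.
Qed.

Lemma state_matrix_unit ns : all (fun n : int => n != 0) ns -> state_matrix ns \in unitmx.
Proof.
move=> /allP nz; rewrite unitmxE unitfE det_state_matrix prodf_seq_neq0.
apply/allP => i _ /=; rewrite mulf_neq0 ?invr_eq0 // intr_eq0.
by apply: nz; rewrite mem_nth.
Qed.

Lemma state_poly_pencil ns :
  state_poly ns = pencil_poly (state_matrix ns) (state_matrix ns)^T.
Proof.
by rewrite /state_poly /pencil_poly; congr (\det _); apply/matrixP => i j; rewrite !mxE.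
Qed.

Lemma span_deg_state_poly ns : all (fun n : int => n != 0) ns ->
  span_deg (state_poly ns) = size ns.
Proof.
move=> nz; rewrite state_poly_pencil span_deg_pencil_poly ?unitmx_tr //.
all: exact: state_matrix_unit.
Qed.

Definition admissible (s : seq int) : bool := all (fun n : int => (2 <= `|n|)%N) s.

Lemma cf_cons (n : int) s : cf (n :: s) = n%:~R + (cf s)^-1.
Proof. by case: s => [|m s] //=; rewrite invr0 addr0. Qed.

Lemma cf_map_opp s : cf (map -%R s) = - cf s.
Proof.
elim: s => [|n s IH]; first by rewrite oppr0.
by rewrite map_cons !cf_cons IH invrN intrN opprD.
Qed.

Lemma admissible_map_opp s : admissible (map -%R s) = admissible s.
Proof. by rewrite /admissible all_map; apply: eq_all => n /=; rewrite abszN. Qed.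

Lemma orientable_map_opp s : orientable_expansion (map -%R s) = orientable_expansion s.
Proof. by rewrite /orientable_expansion all_map; apply: eq_all => n /=; rewrite abszN. Qed.

Lemma admissible_neq0 s : admissible s -> all (fun n : int => n != 0) s.
Proof. by apply: sub_all => n; apply: contraTneq => ->. Qed.

Lemma cf_gt1 s : admissible s -> s != [::] -> 1 < `|cf s|.
Proof.
elim: s => [|n s IH] // /andP[n2 s2] _.
have n2' : 2 <= `|n%:~R : rat| by rewrite -intr_norm (ler_int rat 2); lia.
rewrite cf_cons; case: s IH s2 => [|m s] IH s2.
  by rewrite invr0 addr0; apply: lt_le_trans n2'.
have gt1 := IH s2 isT.
have inv_lt1 : `|(cf (m :: s))^-1| < 1 by rewrite normfV invf_lt1 //; lra.
have := ler_normB (n%:~R + (cf (m :: s))^-1 : rat) ((cf (m :: s))^-1).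
rewrite addrK; lra.
Qed.

Lemma cf_inv_lt1 s : admissible s -> `|(cf s)^-1| < 1.
Proof.
case: s => [|n s] adm; first by rewrite invr0 normr0.
have gt1 := cf_gt1 adm isT.
by rewrite normfV invf_lt1 //; lra.
Qed.

Lemma int_eq_of_even_dist (x y : int) :
  ~~ odd `|x - y| -> `|x%:~R - y%:~R : rat| < 2 -> x = y.
Proof. by rewrite -intrB -intr_norm (ltr_int rat _ 2); lia. Qed.

Lemma orientable_cf_inj ms ns :
  admissible ms -> admissible ns -> orientable_expansion ms -> orientable_expansion ns ->
  ms != [::] -> ns != [::] -> cf ms = cf ns -> ms = ns.
Proof.
elim: ms ns => [|m ms IH] [|n ns] //.
move=> /andP[_ ams] /andP[_ ans] /andP[em oms] /andP[en ons] _ _.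
rewrite !cf_cons => e.
have mn : m = n.
  apply: int_eq_of_even_dist; first by lia.
  have -> : (m%:~R - n%:~R : rat) = (cf ns)^-1 - (cf ms)^-1 by lra.
  have := ler_normB ((cf ns)^-1) ((cf ms)^-1).
  have := cf_inv_lt1 ams; have := cf_inv_lt1 ans; lra.
rewrite -mn in e *; move/addrI/invr_inj: e => e; congr cons.
case: ms ns IH ams ans oms ons e => [|m' ms] [|n' ns] IH ams ans oms ons e //.
- by have := @cf_gt1 (_ :: _) ans isT; rewrite -e normr0 ltr10.
- by have := @cf_gt1 (_ :: _) ams isT; rewrite e normr0 ltr10.
exact: IH.
Qed.

Lemma orientable_cf_ratio s : orientable_expansion s ->
  exists P Q : int, [/\ Q != 0, odd `|P + Q| & cf s = P%:~R / Q%:~R].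
Proof.
elim: s => [|n s IH]; first by exists 0, 1; rewrite mul0r.
move=> /andP[en /IH [P [Q [Q0 oPQ eq_cf]]]].
rewrite cf_cons eq_cf; have [->|P0] := eqVneq P 0.
  by exists n, 1; split => //; [lia | rewrite mul0r invr0 addr0 divr1].
have [a n2a] : exists a, n = 2 * a by exists (n %/ 2)%Z; lia.
exists (n * P + Q), P; split => //; first by rewrite n2a; lia.
by rewrite invf_div intrD intrM; field; rewrite intr_eq0.
Qed.

Lemma orientable_cf_neq_odd_ratio s (A B : int) :
  orientable_expansion s -> odd `|A| -> odd `|B| -> cf s != A%:~R / B%:~R.
Proof.
move=> /orientable_cf_ratio [P [Q [Q0 oPQ ->]]] oA oB.
have B0 : B != 0 by apply: contraTneq oB => ->.
rewrite eqr_div ?intr_eq0 // -!intrM eqr_int.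
by apply/eqP => ePB; move: oPQ; lia.
Qed.

Section Expansions.
Variables (a : nat) (b : int).

Lemma span_deg_essential_state_poly ns : essential_expansion a b ns ->
  span_deg (state_poly ns) = size ns.
Proof. by case=> _ adm _; rewrite span_deg_state_poly // admissible_neq0. Qed.

Lemma has_state_degree_size ns :
  essential_expansion a b ns -> has_state_degree a b (size ns).
Proof. by move=> ens; exists ns; rewrite span_deg_essential_state_poly. Qed.

Hypothesis a_odd : odd a.

Lemma expansion_int_part_parity ns r : orientable_expansion ns ->
  b%:~R / a%:R = r%:~R + (cf ns)^-1 :> rat -> ~~ odd `|(b - r * a%:Z)%R|.
Proof.
move=> ons e; apply/negP => odd_br.
have a0 : a%:R != 0 :> rat by rewrite pnatr_eq0; apply: contraTneq a_odd => ->.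
have eq_cf : cf ns = (a%:Z)%:~R / (b - r * a%:Z)%:~R.
  rewrite -[cf ns]invrK -invf_div; congr _^-1.
  by apply: (addrI r%:~R); rewrite -e intrB intrM; field.
by have := orientable_cf_neq_odd_ratio (A := a) ons a_odd odd_br; rewrite eq_cf eqxx.
Qed.

Lemma orientable_expansion_unique ms ns :
  essential_expansion a b ms -> orientable_expansion ms ->
  essential_expansion a b ns -> orientable_expansion ns -> ms = ns.
Proof.
move=> [m0 ams [r em]] oms [n0 ans [r' en]] ons.
have rr' : r = r'.
  apply: int_eq_of_even_dist.
    have : ~~ odd `|((r - r') * a%:Z)%R|.
      have -> : ((r - r') * a%:Z = (b - r' * a%:Z) - (b - r * a%:Z))%R by ring.
      by move: (expansion_int_part_parity oms em) (expansion_int_part_parity ons en); lia.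
    by rewrite abszM oddM a_odd andbT.
  have -> : (r%:~R - r'%:~R : rat) = (cf ns)^-1 - (cf ms)^-1 by move: em en; lra.
  have := ler_normB ((cf ns)^-1) ((cf ms)^-1).
  by have := cf_inv_lt1 ams; have := cf_inv_lt1 ans; lra.
apply: orientable_cf_inj; rewrite // -?size_eq0 -?lt0n //.
by apply/invr_inj/(addrI r%:~R); rewrite -em en rr'.
Qed.

Lemma alexander_degree_size ns : essential_expansion a b ns -> orientable_expansion ns ->
  alexander_degree a b (size ns).
Proof.
move=> ens ons; split; first by exists ns.
move=> ms ems oms.
by rewrite (orientable_expansion_unique ems oms ens ons) span_deg_essential_state_poly.
Qed.

End Expansions.

Fixpoint zigzag (k : nat) (c : int) : seq int :=
  if k is k'.+1 then 2 :: map -%R (zigzag k' c) else [:: c].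

Lemma size_zigzag k c : size (zigzag k c) = k.+1.
Proof. by elim: k => //= k IH; rewrite size_map IH. Qed.

Lemma admissible_zigzag k c : (2 <= `|c|)%N -> admissible (zigzag k c).
Proof. by move=> c2; elim: k => [|k IH] /=; rewrite ?c2 // admissible_map_opp. Qed.

Lemma orientable_zigzag k c : ~~ odd `|c| -> orientable_expansion (zigzag k c).
Proof. by move=> c_even; elim: k => [|k IH] /=; rewrite ?c_even // orientable_map_opp. Qed.

Lemma cf_zigzag k c : 1 < c ->
  cf (zigzag k c) = (k.+1%:R * (c%:~R - 1) + 1) / (k%:R * (c%:~R - 1) + 1).
Proof.
move=> c1; have d0 : 0 < c%:~R - 1 :> rat by rewrite subr_gt0 (ltr_int rat 1).
elim: k => [|k IH]; first by rewrite /= mul1r mul0r add0r divr1 subrK.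
rewrite cf_cons cf_map_opp IH invrN invf_div -natr1.
have k0 := ler0n rat k.
by field; rewrite lt0r_neq0 //; nra.
Qed.

Lemma natr_double3 (R : nzSemiRingType) k : k.*2.+3%:R = 2 * k.+1%:R + 1 :> R.
Proof. by rewrite -[k.*2.+3]/((k.+1).*2.+1)%N -mul2n -natr1 natrM. Qed.

Lemma torus_knot_expansion k : essential_expansion k.+2 1 [:: k.+2%:Z].
Proof. by split => //; exists 0; rewrite add0r mul1r. Qed.

Lemma torus_knot_seifert_expansion k :
  essential_expansion k.+2 1 (map -%R (zigzag k 2)).
Proof.
split; rewrite ?size_map ?size_zigzag //.
  by rewrite -/(admissible _) admissible_map_opp admissible_zigzag.
exists 1; rewrite cf_map_opp cf_zigzag // invrN invf_div -!natr1.
by field; rewrite !natr1 pnatr_eq0.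
Qed.

Lemma twist_knot_seifert_expansion k : (0 < k)%N ->
  essential_expansion k.*2.+3 2 [:: k.+1%:Z; 2].
Proof.
move=> k0; split => //; first by rewrite /admissible /=; lia.
rewrite natr_double3.
exists 0; rewrite cf_cons /= add0r -pmulrn.
by field; rewrite lt0r_neq0 //; have := ler0n rat k; lra.
Qed.

Lemma twist_knot_expansion k : essential_expansion k.*2.+3 2 (map -%R (zigzag k 3)).
Proof.
split; rewrite ?size_map ?size_zigzag //.
  by rewrite -/(admissible _) admissible_map_opp admissible_zigzag.
rewrite natr_double3.
exists 1; rewrite cf_map_opp cf_zigzag // invrN invf_div -natr1.
by field; rewrite lt0r_neq0 //; have := ler0n rat k; lra.
Qed.

Theorem proposition3p2 :
  (forall N : nat, exists (alpha : nat) (beta : int) (d : nat),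
     two_bridge alpha beta /\ has_state_degree alpha beta 1 /\
     alexander_degree alpha beta d /\ (N <= d)%N) /\
  (forall N : nat, exists (alpha : nat) (beta : int) (d : nat),
     two_bridge alpha beta /\ alexander_degree alpha beta 2 /\
     has_state_degree alpha beta d /\ (N <= d)%N).
Proof.
split=> N; set k := N.*2.+1.
- have alpha_odd : odd k.+2 by rewrite /= odd_double.
  exists k.+2, 1, k.+1; split; [|split; [|split]].
  + by split; rewrite //= coprimen1.
  + exact: (has_state_degree_size (torus_knot_expansion k)).
  + have := alexander_degree_size alpha_odd (torus_knot_seifert_expansion k).
    by rewrite size_map size_zigzag orientable_map_opp; apply; apply: orientable_zigzag.
  + by rewrite /k; lia.
- have alpha_odd : odd k.*2.+3 by rewrite /= odd_double.
  exists k.*2.+3, 2, k.+1; split; [|split; [|split]].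
  + by split; rewrite // coprimen2.
  + apply: (alexander_degree_size alpha_odd (twist_knot_seifert_expansion _)) => //.
    by rewrite /orientable_expansion /= odd_double.
  + have := has_state_degree_size (twist_knot_expansion k).
    by rewrite size_map size_zigzag.
  + by rewrite /k; lia.
Qed.
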